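(* Let $X,Y:[0,T]\to\mathbb R^2$ be $C^1$ and $\Psi:\mathbb R^2\to\mathbb R^2$ be $C^1$ with $\dot Y=\Psi(Y)$. Let $E_+=\{\Psi_1>0\}$, $E_-=\{\Psi_1<0\}$. Suppose that $X(0)=Y(0)\in E_+\cup E_-$; that for $t\in(0,T]$, $\Psi_1(X(t)),\Psi_1(Y(t))>0$ if $X(0)\in E_+$ and $\Psi_1(X(t)),\Psi_1(Y(t))<0$ if $X(0)\in E_-$; and that $\dot X\le_2\Psi(X)$ (resp. $\dot X\ge_2\Psi(X)$) on $[0,T]$. Then $f_X=X_2\circ X_1^{-1}$ and $f_Y=Y_2\circ Y_1^{-1}$ are well defined, differentiable for $u\ne X_1(0)$, and $f_X(u)\le f_Y(u)$ (resp. $f_X(u)\ge f_Y(u)$) on the intersection of their domains.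
   Context: For $v,w\in\mathbb R^2$, $v\le_2w$ means $v_1=w_1$ and $v_2\le w_2$; $v\ge_2 w$ is defined analogously. *)

From Stdlib Require Import Reals.
Open Scope R_scope.

(* l is the derivative of f at t relative to the set D (one-sided at
   boundary points of an interval). *)
Definition has_deriv_within (D : R -> Prop) (f : R -> R) (t l : R) : Prop :=
  forall eps : R, 0 < eps -> exists delta : R, 0 < delta /\
    forall h : R, h <> 0 -> Rabs h < delta -> D (t + h) ->
      Rabs ((f (t + h) - f t) / h - l) < eps.

Definition continuous_within (D : R -> Prop) (f : R -> R) (t : R) : Prop :=
  forall eps : R, 0 < eps -> exists delta : R, 0 < delta /\
    forall s : R, D s -> Rabs (s - t) < delta -> Rabs (f s - f t) < eps.

Definition Icc0 (T : R) (t : R) : Prop := 0 <= t <= T.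

Definition continuous2 (g : R -> R -> R) : Prop :=
  forall x y eps : R, 0 < eps -> exists delta : R, 0 < delta /\
    forall x' y' : R, Rabs (x' - x) < delta -> Rabs (y' - y) < delta ->
      Rabs (g x' y' - g x y) < eps.

Definition C1_R2 (g : R -> R -> R) : Prop :=
  exists gx gy : R -> R -> R,
    (forall x y, derivable_pt_lim (fun s => g s y) x (gx x y)) /\
    (forall x y, derivable_pt_lim (fun s => g x s) y (gy x y)) /\
    continuous2 gx /\ continuous2 gy.

Definition inj_on (D : R -> Prop) (f : R -> R) : Prop :=
  forall s t, D s -> D t -> f s = f t -> s = t.

Definition image (D : R -> Prop) (f : R -> R) (u : R) : Prop :=
  exists t, D t /\ f t = u.

From Stdlib Require Import Reals Lra Psatz ClassicalEpsilon.
Open Scope R_scope.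

(* Since Psi1 keeps a fixed sign s = +-1 along both curves, X1 and Y1 are
   strictly monotone, so the curves are graphs u |-> fX u = X2 (X1^-1 u) and
   fY u = Y2 (Y1^-1 u); by the inverse function rule these are differentiable
   with slopes X2'/X1' and Psi2/Psi1.  For the comparison, let t1 be a time at
   which X1 t1 lies in the range of Y1, and follow the gap
   w t = sg * (X2 t - fY (X1 t)) on [0, t1].  It vanishes at 0, and by the
   chain rule w' = sg * (X2' - Psi2(X)) + sg * Psi1(X) * (Psi2/Psi1 (X) -
   Psi2/Psi1 (X1, fY X1)), whose first term is <= 0 and whose second term is
   at most K |w| because the slope field Psi2/Psi1 of a C^1 field is locally
   Lipschitz where Psi1 <> 0.  A Gronwall-type comparison principle then gives
   w <= 0, i.e. sg * (fX - fY) <= 0. *)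

(* A function differentiable within D at t is continuous within D at t:
   |f s - f t| = |difference quotient| * |s - t| <= (|l| + 1) |s - t|. *)
Lemma deriv_within_continuous D f t l :
  has_deriv_within D f t l -> continuous_within D f t.
Proof.
  intros H eps Heps.
  destruct (H 1 Rlt_0_1) as [d [Hd Hq]].
  pose proof (Rabs_pos l).
  assert (Hk : 0 < eps / (Rabs l + 1)) by (apply Rdiv_lt_0_compat; lra).
  exists (Rmin d (eps / (Rabs l + 1))). split; [apply Rmin_pos; lra|].
  intros s Ds Hs.
  pose proof (Rmin_l d (eps / (Rabs l + 1))). pose proof (Rmin_r d (eps / (Rabs l + 1))).
  destruct (Req_dec s t) as [->|Hne]; [rewrite Rminus_diag, Rabs_R0; lra|].
  specialize (Hq (s - t) ltac:(lra) ltac:(lra)).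
  replace (t + (s - t)) with s in Hq by ring. specialize (Hq Ds).
  set (q := (f s - f t) / (s - t)) in *.
  assert (E : f s - f t = q * (s - t)) by (unfold q; field; lra).
  rewrite E, Rabs_mult.
  assert (Hq2 : Rabs q < Rabs l + 1).
  { pose proof (Rabs_triang (q - l) l). replace (q - l + l) with q in * by ring. lra. }
  assert (Ee : eps = (Rabs l + 1) * (eps / (Rabs l + 1))) by (field; lra).
  pose proof (Rabs_pos (s - t)). pose proof (Rabs_pos q). nra.
Qed.

Lemma deriv_within_interior D f t l :
  has_deriv_within D f t l ->
  (exists r, 0 < r /\ forall x, Rabs (x - t) < r -> D x) ->
  derivable_pt_lim f t l.
Proof.
  intros H [r [Hr HD]] eps Heps. destruct (H eps Heps) as [d [Hd Hq]].
  exists (mkposreal _ (Rmin_pos _ _ Hd Hr)). intros h Hh Hh2. simpl in Hh2.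
  pose proof (Rmin_l d r). pose proof (Rmin_r d r).
  apply Hq; [exact Hh | lra |]. apply HD. replace (t + h - t) with h by ring. lra.
Qed.

(* [continuous_within] is the Stdlib limit notion [limit1_in]; this gives
   access to its algebra of limits. *)
Lemma continuous_within_limit1 D f t :
  continuous_within D f t <-> limit1_in f D (f t) t.
Proof.
  unfold continuous_within, limit1_in, limit_in; simpl; unfold R_dist; split.
  - intros H eps He; destruct (H eps He) as [d [Hd Hh]]; exists d; split; auto.
    intros x [Dx Hx]; auto.
  - intros H eps He; destruct (H eps He) as [d [Hd Hh]]; exists d; split; auto.
Qed.

Lemma continuous_within_subset D D' f t :
  continuous_within D f t -> (forall x, D' x -> D x) -> continuous_within D' f t.
Proof.
  intros H HD eps He; destruct (H eps He) as [d [Hd Hh]]; exists d; split; auto.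
Qed.

Lemma continuous_within_comp Df Dg f g t :
  continuous_within Dg g (f t) -> continuous_within Df f t ->
  (forall x, Df x -> Dg (f x)) -> continuous_within Df (fun x => g (f x)) t.
Proof.
  intros Hg Hf HD eps He. destruct (Hg eps He) as [d [Hd Hh]].
  destruct (Hf d Hd) as [d' [Hd' Hh']]. exists d'; split; auto.
Qed.

Lemma continuous_within_mult D f g t :
  continuous_within D f t -> continuous_within D g t ->
  continuous_within D (fun x => f x * g x) t.
Proof.
  intros Hf Hg. apply continuous_within_limit1.
  apply limit_mul; apply continuous_within_limit1; auto.
Qed.

Lemma continuous_within_minus D f g t :
  continuous_within D f t -> continuous_within D g t ->
  continuous_within D (fun x => f x - g x) t.
Proof.
  intros Hf Hg. apply continuous_within_limit1.
  apply limit_minus; apply continuous_within_limit1; auto.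
Qed.

Lemma continuous_within_const D k t : continuous_within D (fun _ => k) t.
Proof.
  intros eps He; exists 1; split; [lra|].
  intros; rewrite Rminus_diag, Rabs_R0; lra.
Qed.

Lemma continuous_within_of_pt D f t : continuity_pt f t -> continuous_within D f t.
Proof.
  unfold continuity_pt, continue_in, limit1_in, limit_in; simpl; unfold R_dist.
  intros H eps He; destruct (H eps He) as [d [Hd Hh]]; exists d; split; auto.
  intros s Ds Hs. destruct (Req_dec t s) as [->|Hne].
  - rewrite Rminus_diag, Rabs_R0; lra.
  - apply Hh; repeat split; auto.
Qed.

(** * Mean value and intermediate value theorems on a closed interval *)

(* Stdlib's MVT and IVT want continuity on all of R.  Composing with the
   retraction [clamp a b] of R onto [a, b] turns a function continuous
   within [a, b] into a globally continuous one, without changing it on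
   [a, b] nor its derivatives at interior points. *)
Definition clamp (a b x : R) : R := Rmax a (Rmin b x).

Lemma clamp_in a b x : a <= b -> a <= clamp a b x <= b.
Proof. intros; unfold clamp, Rmax, Rmin; repeat destruct Rle_dec; lra. Qed.

Lemma clamp_id a b x : a <= x <= b -> clamp a b x = x.
Proof. intros; unfold clamp, Rmax, Rmin; repeat destruct Rle_dec; lra. Qed.

Lemma clamp_1_lipschitz a b x y :
  a <= b -> Rabs (clamp a b x - clamp a b y) <= Rabs (x - y).
Proof.
  intros; unfold clamp, Rmax, Rmin; repeat destruct Rle_dec;
  unfold Rabs; repeat destruct Rcase_abs; lra.
Qed.

Lemma continuity_clamp a b f t : a <= b ->
  (forall x, a <= x <= b -> continuous_within (fun s => a <= s <= b) f x) ->
  continuity_pt (fun x => f (clamp a b x)) t.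
Proof.
  intros Hab Hc. unfold continuity_pt, continue_in, limit1_in, limit_in.
  simpl. unfold R_dist. intros eps Heps.
  destruct (Hc (clamp a b t) (clamp_in a b t Hab) eps Heps) as [d [Hd H]].
  exists d; split; [lra|]. intros x [_ Hx].
  apply H; [apply clamp_in; auto|].
  eapply Rle_lt_trans; [apply clamp_1_lipschitz; auto | exact Hx].
Qed.

Lemma derivable_clamp a b f t l : a < t < b -> derivable_pt_lim f t l ->
  derivable_pt_lim (fun x => f (clamp a b x)) t l.
Proof.
  intros Ht. apply (derivable_pt_lim_locally_ext f _ t a b l Ht).
  intros z Hz. rewrite clamp_id; lra.
Qed.

Lemma MVT_closed (f df : R -> R) a b : a < b ->
  (forall t, a <= t <= b -> continuous_within (fun s => a <= s <= b) f t) ->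
  (forall t, a < t < b -> derivable_pt_lim f t (df t)) ->
  exists c, a < c < b /\ f b - f a = df c * (b - a).
Proof.
  intros Hab Hc Hd.
  set (g := fun x => f (clamp a b x)).
  assert (pr1 : forall c, a < c < b -> derivable_pt g c).
  { intros c Hc'. exists (df c). apply derivable_clamp; auto. }
  assert (pr2 : forall c, a < c < b -> derivable_pt id c)
    by (intros; apply derivable_pt_id).
  destruct (MVT g id a b pr1 pr2 Hab) as [c [P H]].
  - intros; apply continuity_clamp; auto; lra.
  - intros; apply derivable_continuous_pt, derivable_pt_id.
  - exists c; split; auto.
    rewrite (derive_pt_eq_0 g c (df c) (pr1 c P)) in H
      by (apply derivable_clamp; auto).
    rewrite (derive_pt_eq_0 id c 1 (pr2 c P)) in H by apply derivable_pt_lim_id.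
    unfold g, id in H. rewrite !clamp_id in H by lra. nra.
Qed.

Lemma IVT_closed (g : R -> R) a b u : a <= b ->
  (forall t, a <= t <= b -> continuous_within (fun s => a <= s <= b) g t) ->
  (g a <= u <= g b \/ g b <= u <= g a) -> exists z, a <= z <= b /\ g z = u.
Proof.
  intros Hab Hc Hu.
  destruct (IVT_cor (fun x => g (clamp a b x) - u) a b) as [z [Hz Ez]]; auto.
  - intro x. apply continuity_pt_minus; [apply continuity_clamp; auto|].
    apply continuity_pt_const. intros ? ?; reflexivity.
  - rewrite !clamp_id by lra. destruct Hu; nra.
  - exists z; split; auto. rewrite clamp_id in Ez by lra. lra.
Qed.

Lemma Icc0_interior_nbhd T t :
  0 < t < T -> exists r, 0 < r /\ forall x, Rabs (x - t) < r -> Icc0 T x.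
Proof.
  intros Ht. exists (Rmin t (T - t)). split; [apply Rmin_pos; lra|].
  intros x Hx. pose proof (Rmin_l t (T - t)). pose proof (Rmin_r t (T - t)).
  apply Rabs_def2 in Hx. unfold Icc0; lra.
Qed.

Lemma deriv_continuous_subinterval T g dg :
  (forall t, Icc0 T t -> has_deriv_within (Icc0 T) g t (dg t)) ->
  forall a b, 0 <= a -> b <= T ->
  forall t, a <= t <= b -> continuous_within (fun x => a <= x <= b) g t.
Proof.
  intros Hd a b Ha Hb t Ht. apply continuous_within_subset with (Icc0 T).
  - apply deriv_within_continuous with (dg t). apply Hd. unfold Icc0; lra.
  - intros; unfold Icc0; lra.
Qed.

Lemma strict_mono_of_deriv_sign T s g dg :
  (forall t, Icc0 T t -> has_deriv_within (Icc0 T) g t (dg t)) ->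
  (forall t, Icc0 T t -> 0 < s * dg t) ->
  forall x y, Icc0 T x -> Icc0 T y -> x < y -> s * g x < s * g y.
Proof.
  intros Hd Hp x y Hx Hy Hxy. unfold Icc0 in *.
  destruct (MVT_closed g dg x y Hxy) as [c [Hc E]].
  - intros; eapply deriv_continuous_subinterval; eauto; lra.
  - intros t Ht. apply deriv_within_interior with (Icc0 T).
    + apply Hd. unfold Icc0; lra.
    + apply Icc0_interior_nbhd; lra.
  - specialize (Hp c ltac:(unfold Icc0; lra)). nra.
Qed.

Lemma inj_of_strict_mono T s g :
  (forall x y, Icc0 T x -> Icc0 T y -> x < y -> s * g x < s * g y) ->
  inj_on (Icc0 T) g.
Proof.
  intros Hm x y Hx Hy E. destruct (Rtotal_order x y) as [h|[h|h]]; auto.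
  - specialize (Hm x y Hx Hy h). rewrite E in Hm. lra.
  - specialize (Hm y x Hy Hx h). rewrite E in Hm. lra.
Qed.

Lemma image_contains_segment T g dg :
  (forall t, Icc0 T t -> has_deriv_within (Icc0 T) g t (dg t)) ->
  forall s1, Icc0 T s1 -> forall u, (g 0 <= u <= g s1 \/ g s1 <= u <= g 0) ->
  image (Icc0 T) g u.
Proof.
  intros Hd s1 Hs1 u Hu. unfold Icc0 in Hs1.
  destruct (IVT_closed g 0 s1 u ltac:(lra)) as [z [Hz E]]; auto.
  - intros; eapply deriv_continuous_subinterval; eauto; lra.
  - exists z; split; auto. unfold Icc0; lra.
Qed.

(* The inverse of a strictly increasing h on [0, T] is continuous: points
   of [0, T] at distance >= e from t have images at distance >= eta from
   h t. *)
Lemma strict_mono_inverse_continuous (h : R -> R) T t :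
  (forall x y, Icc0 T x -> Icc0 T y -> x < y -> h x < h y) -> Icc0 T t ->
  forall e, 0 < e -> exists eta, 0 < eta /\
    forall s, Icc0 T s -> Rabs (h s - h t) < eta -> Rabs (s - t) < e.
Proof.
  intros Hm Ht e He. unfold Icc0 in *.
  assert (Right : exists eta1, 0 < eta1 /\
            forall s, 0 <= s <= T -> t + e <= s -> eta1 <= h s - h t).
  { destruct (Rle_dec (t + e) T) as [H1|H1].
    - exists (h (t + e) - h t).
      split; [assert (h t < h (t + e)) by (apply Hm; lra); lra|].
      intros s Hs Hs2. destruct (Req_dec s (t + e)) as [->|Hne]; [lra|].
      assert (h (t + e) < h s) by (apply Hm; lra). lra.
    - exists 1; split; [lra|]. intros; lra. }
  assert (Left : exists eta2, 0 < eta2 /\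
            forall s, 0 <= s <= T -> s <= t - e -> eta2 <= h t - h s).
  { destruct (Rle_dec 0 (t - e)) as [H1|H1].
    - exists (h t - h (t - e)).
      split; [assert (h (t - e) < h t) by (apply Hm; lra); lra|].
      intros s Hs Hs2. destruct (Req_dec s (t - e)) as [->|Hne]; [lra|].
      assert (h s < h (t - e)) by (apply Hm; lra). lra.
    - exists 1; split; [lra|]. intros; lra. }
  destruct Right as [e1 [He1 H1]], Left as [e2 [He2 H2]].
  exists (Rmin e1 e2); split; [apply Rmin_pos; lra|].
  intros s Hs Hd. pose proof (Rmin_l e1 e2). pose proof (Rmin_r e1 e2).
  apply Rabs_def2 in Hd. apply Rabs_def1.
  - destruct (Rlt_dec (s - t) e) as [ok|nok]; auto.
    specialize (H1 s Hs ltac:(lra)). lra.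
  - destruct (Rlt_dec (- e) (s - t)) as [ok|nok]; auto.
    specialize (H2 s Hs ltac:(lra)). lra.
Qed.

(** * The graph function f o g^-1 of a plane curve (g, f) *)

(* A (choice-based) inverse of g on D; it is a genuine left inverse when g
   is injective on D. *)
Definition inv_on (D : R -> Prop) (g : R -> R) (u : R) : R :=
  match excluded_middle_informative (exists t, D t /\ g t = u) with
  | left H => proj1_sig (constructive_indefinite_description _ H)
  | right _ => 0
  end.

Lemma inv_on_spec D g t : inj_on D g -> D t -> inv_on D g (g t) = t.
Proof.
  intros Hi Dt. unfold inv_on. destruct excluded_middle_informative as [H|H].
  - destruct (constructive_indefinite_description _ H) as [s [Ds Hs]].
    simpl. apply Hi; auto.
  - exfalso; apply H; exists t; auto.
Qed.

Definition graph_fun (D : R -> Prop) (g f : R -> R) (u : R) : R :=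
  f (inv_on D g u).

Lemma graph_fun_spec D g f t : inj_on D g -> D t -> graph_fun D g f (g t) = f t.
Proof. intros Hi Dt. unfold graph_fun. rewrite inv_on_spec; auto. Qed.

Lemma quotient_perturbation a b A B e1 :
  a <> 0 -> Rabs (A - a) < e1 -> Rabs (B - b) < e1 -> e1 <= Rabs a / 2 ->
  Rabs (B / A - b / a) <= 2 * e1 * (Rabs a + Rabs b) / (Rabs a * Rabs a).
Proof.
  intros Ha H1 H2 H3.
  pose proof (Rabs_pos_lt a Ha) as Hpa. pose proof (Rabs_pos b).
  assert (HA : Rabs a / 2 < Rabs A).
  { pose proof (Rabs_triang (a - A) A) as Ht. replace (a - A + A) with a in Ht by ring.
    rewrite <- Rabs_Ropp in H1. replace (- (A - a)) with (a - A) in H1 by ring. lra. }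
  assert (HA0 : A <> 0) by (intro E; rewrite E, Rabs_R0 in HA; lra).
  replace (B / A - b / a) with ((a * (B - b) - b * (A - a)) / (a * A)) by (field; auto).
  unfold Rdiv at 1. rewrite Rabs_mult, Rabs_inv, Rabs_mult.
  assert (HN : Rabs (a * (B - b) - b * (A - a)) <= e1 * (Rabs a + Rabs b)).
  { unfold Rminus at 1. eapply Rle_trans; [apply Rabs_triang|].
    rewrite Rabs_Ropp, !Rabs_mult.
    pose proof (Rabs_pos (B - b)). pose proof (Rabs_pos (A - a)). nra. }
  pose proof (Rabs_pos (a * (B - b) - b * (A - a))).
  set (N := Rabs (a * (B - b) - b * (A - a))) in *.
  set (x := Rabs a) in *. set (y := Rabs A) in *. set (z := Rabs b) in *.
  assert (Hinv : / (x * y) <= 2 * / (x * x)).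
  { rewrite !Rinv_mult.
    assert (/ y <= 2 * / x).
    { apply Rle_trans with (/ (x / 2)); [apply Rinv_le_contravar; lra|].
      right; field; lra. }
    pose proof (Rinv_0_lt_compat x Hpa). nra. }
  unfold Rdiv. apply Rle_trans with (e1 * (x + z) * / (x * y)).
  - apply Rmult_le_compat_r; auto. left; apply Rinv_0_lt_compat; nra.
  - assert (0 <= e1 * (x + z)) by nra. nra.
Qed.

Lemma graph_fun_deriv (D : R -> Prop) (g f : R -> R) t a b :
  inj_on D g -> D t -> has_deriv_within D g t a -> has_deriv_within D f t b ->
  a <> 0 ->
  (forall e, 0 < e -> exists eta, 0 < eta /\
     forall s, D s -> Rabs (g s - g t) < eta -> Rabs (s - t) < e) ->
  has_deriv_within (image D g) (graph_fun D g f) (g t) (b / a).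
Proof.
  intros Hi Dt Hg Hf Ha Hc eps He.
  pose proof (Rabs_pos_lt a Ha). pose proof (Rabs_pos b).
  set (k := eps * (Rabs a * Rabs a) / (4 * (Rabs a + Rabs b))).
  assert (Hk : 0 < k) by (apply Rdiv_lt_0_compat; [apply Rmult_lt_0_compat|]; nra).
  set (e1 := Rmin (Rabs a / 2) k).
  assert (He1 : 0 < e1) by (apply Rmin_pos; lra).
  assert (Hle1 : e1 <= Rabs a / 2) by apply Rmin_l.
  assert (Hle2 : e1 <= k) by apply Rmin_r.
  destruct (Hg e1 He1) as [d1 [Hd1 Hq1]].
  destruct (Hf e1 He1) as [d2 [Hd2 Hq2]].
  destruct (Hc (Rmin d1 d2) (Rmin_pos _ _ Hd1 Hd2)) as [eta [Heta Hs]].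
  exists eta; split; auto.
  intros h Hh Hh2 [s [Ds Hgs]]. unfold graph_fun.
  rewrite inv_on_spec, <- Hgs, inv_on_spec by auto.
  assert (Hst : Rabs (s - t) < Rmin d1 d2).
  { apply Hs; auto. rewrite Hgs. replace (g t + h - g t) with h by ring. auto. }
  pose proof (Rmin_l d1 d2). pose proof (Rmin_r d1 d2).
  assert (Hk0 : s - t <> 0) by (intro E; apply Hh; replace s with t in Hgs by lra; lra).
  specialize (Hq1 (s - t) Hk0 ltac:(lra)). specialize (Hq2 (s - t) Hk0 ltac:(lra)).
  replace (t + (s - t)) with s in Hq1, Hq2 by ring.
  specialize (Hq1 Ds). specialize (Hq2 Ds).
  replace h with (g s - g t) in Hh |- * by lra.
  replace ((f s - f t) / (g s - g t))
    with (((f s - f t) / (s - t)) / ((g s - g t) / (s - t))) by (field; split; auto).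
  eapply Rle_lt_trans; [apply quotient_perturbation; eauto|].
  apply Rle_lt_trans with (2 * k * (Rabs a + Rabs b) / (Rabs a * Rabs a)).
  - unfold Rdiv. apply Rmult_le_compat_r; [left; apply Rinv_0_lt_compat; nra|].
    apply Rmult_le_compat_r; lra.
  - replace (2 * k * (Rabs a + Rabs b) / (Rabs a * Rabs a)) with (eps / 2)
      by (unfold k; field; nra). lra.
Qed.

Lemma graph_fun_deriv_monotone T s g f dg df : (s = 1 \/ s = -1) ->
  (forall t, Icc0 T t -> has_deriv_within (Icc0 T) g t (dg t)) ->
  (forall t, Icc0 T t -> has_deriv_within (Icc0 T) f t (df t)) ->
  (forall t, Icc0 T t -> 0 < s * dg t) ->
  forall t, Icc0 T t ->
  has_deriv_within (image (Icc0 T) g) (graph_fun (Icc0 T) g f) (g t) (df t / dg t).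
Proof.
  intros Hs Hg Hf Hp t Ht.
  pose proof (strict_mono_of_deriv_sign T s g dg Hg Hp) as Hm.
  apply graph_fun_deriv; auto.
  - apply (inj_of_strict_mono T s g Hm).
  - specialize (Hp t Ht). intro E; rewrite E in Hp; lra.
  - intros e He.
    destruct (strict_mono_inverse_continuous (fun x => s * g x) T t Hm Ht e He)
      as [eta [Heta H]].
    exists eta; split; auto. intros s' Hs' Hd. apply H; auto.
    replace (s * g s' - s * g t) with (s * (g s' - g t)) by ring.
    rewrite Rabs_mult.
    replace (Rabs s) with 1 by (destruct Hs; subst; unfold Rabs; destruct Rcase_abs; lra).
    lra.
Qed.

(** * Local Lipschitz estimates for C^1 functions of two variables *)

Lemma lipschitz_of_bounded_derivative (f df : R -> R) c0 r M :
  (forall x, derivable_pt_lim f x (df x)) ->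
  (forall x, Rabs (x - c0) < r -> Rabs (df x) <= M) ->
  forall y y', Rabs (y - c0) < r -> Rabs (y' - c0) < r ->
  Rabs (f y - f y') <= M * Rabs (y - y').
Proof.
  intros Hd Hb.
  assert (Ordered : forall y y', y' < y -> Rabs (y - c0) < r -> Rabs (y' - c0) < r ->
            Rabs (f y - f y') <= M * Rabs (y - y')).
  { intros y y' Hlt H1 H2. destruct (MVT_cor2 f df y' y Hlt) as [c [Hc Hc2]].
    { intros; apply Hd. }
    rewrite Hc, Rabs_mult. apply Rmult_le_compat_r; [apply Rabs_pos|]. apply Hb.
    apply Rabs_def2 in H1. apply Rabs_def2 in H2. apply Rabs_def1; lra. }
  intros y y' H1 H2. destruct (Rtotal_order y y') as [h|[h|h]]; auto.
  - rewrite <- Rabs_Ropp, <- (Rabs_Ropp (y - y')).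
    replace (- (f y - f y')) with (f y' - f y) by ring.
    replace (- (y - y')) with (y' - y) by ring. auto.
  - subst. rewrite !Rminus_diag, Rabs_R0.
    specialize (Hb y' H1). pose proof (Rabs_pos (df y')). lra.
Qed.

Lemma C1_R2_lipschitz_y g : C1_R2 g -> forall x0 y0, exists r M, 0 < r /\ 0 < M /\
  forall x y y', Rabs (x - x0) < r -> Rabs (y - y0) < r -> Rabs (y' - y0) < r ->
  Rabs (g x y - g x y') <= M * Rabs (y - y').
Proof.
  intros [gx [gy [Hx [Hy [Cx Cy]]]]] x0 y0.
  destruct (Cy x0 y0 1 Rlt_0_1) as [d [Hd Hdd]].
  exists d, (Rabs (gy x0 y0) + 1).
  split; [auto | split; [pose proof (Rabs_pos (gy x0 y0)); lra|]].
  intros x y y' H1 H2 H3.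
  apply (lipschitz_of_bounded_derivative (fun s => g x s) (gy x) y0 d); auto.
  intros s Hs. specialize (Hdd x s H1 Hs).
  pose proof (Rabs_triang (gy x s - gy x0 y0) (gy x0 y0)).
  replace (gy x s - gy x0 y0 + gy x0 y0) with (gy x s) in * by ring. lra.
Qed.

Lemma C1_R2_lipschitz_x g : C1_R2 g -> forall x0 y0, exists r M, 0 < r /\ 0 < M /\
  forall x x' y, Rabs (x - x0) < r -> Rabs (x' - x0) < r -> Rabs (y - y0) < r ->
  Rabs (g x y - g x' y) <= M * Rabs (x - x').
Proof.
  intros [gx [gy [Hx [Hy [Cx Cy]]]]] x0 y0.
  destruct (Cx x0 y0 1 Rlt_0_1) as [d [Hd Hdd]].
  exists d, (Rabs (gx x0 y0) + 1).
  split; [auto | split; [pose proof (Rabs_pos (gx x0 y0)); lra|]].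
  intros x x' y H1 H2 H3.
  apply (lipschitz_of_bounded_derivative (fun s => g s y) (fun s => gx s y) x0 d); auto.
  intros s Hs. specialize (Hdd s y Hs H3).
  pose proof (Rabs_triang (gx s y - gx x0 y0) (gx x0 y0)).
  replace (gx s y - gx x0 y0 + gx x0 y0) with (gx s y) in * by ring. lra.
Qed.

Lemma C1_R2_continuous g : C1_R2 g -> continuous2 g.
Proof.
  intros HC x0 y0 eps He.
  destruct (C1_R2_lipschitz_y g HC x0 y0) as [r1 [M1 [Hr1 [HM1 H1]]]].
  destruct (C1_R2_lipschitz_x g HC x0 y0) as [r2 [M2 [Hr2 [HM2 H2]]]].
  assert (Hk : 0 < eps / (M1 + M2)) by (apply Rdiv_lt_0_compat; lra).
  set (d := Rmin (Rmin r1 r2) (eps / (M1 + M2))).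
  assert (Hd : d <= Rmin r1 r2 /\ d <= eps / (M1 + M2)) by (split; [apply Rmin_l | apply Rmin_r]).
  pose proof (Rmin_l r1 r2). pose proof (Rmin_r r1 r2).
  exists d. split; [apply Rmin_pos; [apply Rmin_pos|]; lra|].
  intros x y Hx Hy.
  assert (A1 : Rabs (g x y - g x y0) <= M1 * Rabs (y - y0))
    by (apply H1; rewrite ?Rminus_diag, ?Rabs_R0; lra).
  assert (A2 : Rabs (g x y0 - g x0 y0) <= M2 * Rabs (x - x0))
    by (apply H2; rewrite ?Rminus_diag, ?Rabs_R0; lra).
  pose proof (Rabs_triang (g x y - g x y0) (g x y0 - g x0 y0)).
  replace (g x y - g x y0 + (g x y0 - g x0 y0)) with (g x y - g x0 y0) in * by ring.
  assert (Ee : eps = (M1 + M2) * (eps / (M1 + M2))) by (field; lra).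
  pose proof (Rabs_pos (x - x0)). pose proof (Rabs_pos (y - y0)). nra.
Qed.

(* Algebraic core of the slope-field estimate: with p = (p1, p2) and
   z = (z1, z2) close and z1 bounded away from 0,
   p2 - z2 * p1 / z1 = (z1 (p2 - z2) - z2 (p1 - z1)) / z1. *)
Lemma slope_difference_bound p1 p2 z1 z2 L1 L2 B1 B2 m d :
  0 < m -> m < Rabs z1 -> Rabs z1 <= B1 -> Rabs z2 <= B2 ->
  Rabs (p1 - z1) <= L1 * d -> Rabs (p2 - z2) <= L2 * d ->
  0 <= L1 -> 0 <= L2 -> 0 <= d ->
  Rabs (p2 - z2 * p1 / z1) <= (B1 * L2 + B2 * L1) / m * d.
Proof.
  intros Hm Hz1 HB1 HB2 H1 H2 HL1 HL2 Hd.
  assert (Hz : z1 <> 0) by (intro E; rewrite E, Rabs_R0 in Hz1; lra).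
  replace (p2 - z2 * p1 / z1) with ((z1 * (p2 - z2) - z2 * (p1 - z1)) * / z1)
    by (field; auto).
  rewrite Rabs_mult, Rabs_inv.
  pose proof (Rabs_pos z1). pose proof (Rabs_pos z2).
  assert (HN : Rabs (z1 * (p2 - z2) - z2 * (p1 - z1)) <= (B1 * L2 + B2 * L1) * d).
  { unfold Rminus at 1. eapply Rle_trans; [apply Rabs_triang|].
    rewrite Rabs_Ropp, !Rabs_mult.
    pose proof (Rabs_pos (p2 - z2)). pose proof (Rabs_pos (p1 - z1)). nra. }
  assert (Hi : / Rabs z1 <= / m) by (apply Rinv_le_contravar; lra).
  pose proof (Rinv_0_lt_compat (Rabs z1) ltac:(lra)).
  pose proof (Rabs_pos (z1 * (p2 - z2) - z2 * (p1 - z1))).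
  assert (0 <= (B1 * L2 + B2 * L1) * d) by (apply Rmult_le_pos; nra).
  replace ((B1 * L2 + B2 * L1) / m * d) with ((B1 * L2 + B2 * L1) * d * / m)
    by (unfold Rdiv; ring).
  apply Rmult_le_compat; auto; lra.
Qed.

(* Near a point where P1 <> 0, the slope field P2 / P1 is Lipschitz in the
   second variable, in the multiplied-out form needed along a curve whose
   velocity has first component P1(x, y):
   |P2(x,y) - (P2/P1)(x,z) * P1(x,y)| <= K |y - z|. *)
Lemma slope_field_locally_lipschitz P1 P2 : C1_R2 P1 -> C1_R2 P2 ->
  forall x0 y0, P1 x0 y0 <> 0 -> exists r K, 0 < r /\
  forall x y z, Rabs (x - x0) < r -> Rabs (y - y0) < r -> Rabs (z - y0) < r ->
  Rabs (P2 x y - P2 x z * P1 x y / P1 x z) <= K * Rabs (y - z).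
Proof.
  intros H1 H2 x0 y0 Hp.
  destruct (C1_R2_lipschitz_y P1 H1 x0 y0) as [r1 [L1 [Hr1 [HL1 HH1]]]].
  destruct (C1_R2_lipschitz_y P2 H2 x0 y0) as [r2 [L2 [Hr2 [HL2 HH2]]]].
  pose proof (Rabs_pos_lt _ Hp).
  destruct (C1_R2_continuous P1 H1 x0 y0 (Rabs (P1 x0 y0) / 2) ltac:(lra))
    as [r3 [Hr3 HH3]].
  destruct (C1_R2_continuous P2 H2 x0 y0 1 Rlt_0_1) as [r4 [Hr4 HH4]].
  set (r := Rmin (Rmin r1 r2) (Rmin r3 r4)).
  assert (Hr : r <= Rmin r1 r2 /\ r <= Rmin r3 r4) by (split; [apply Rmin_l | apply Rmin_r]).
  pose proof (Rmin_l r1 r2). pose proof (Rmin_r r1 r2).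
  pose proof (Rmin_l r3 r4). pose proof (Rmin_r r3 r4).
  exists r, ((2 * Rabs (P1 x0 y0) * L2 + (Rabs (P2 x0 y0) + 1) * L1)
             / (Rabs (P1 x0 y0) / 2)).
  split; [unfold r; repeat apply Rmin_pos; lra|].
  intros x y z Hx Hy Hz.
  specialize (HH3 x z ltac:(lra) ltac:(lra)). specialize (HH4 x z ltac:(lra) ltac:(lra)).
  pose proof (Rabs_triang_inv (P1 x z) (P1 x0 y0)).
  pose proof (Rabs_triang_inv (P1 x0 y0) (P1 x z)).
  pose proof (Rabs_triang_inv (P2 x z) (P2 x0 y0)).
  pose proof (Rabs_minus_sym (P1 x z) (P1 x0 y0)).
  apply slope_difference_bound; try lra.
  - apply HH1; lra.
  - apply HH2; lra.
  - apply Rabs_pos.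
Qed.

(** * A one-sided comparison (Gronwall-type) principle *)

(* If w a <= 0 but w t1 > 0, there is a last zero c of w before t1, after
   which w stays positive (c is the supremum of {x in [a, t1] | w x <= 0}). *)
Lemma last_zero_before_positive (a b t1 : R) (w : R -> R) :
  (forall t, a <= t <= b -> continuous_within (fun x => a <= x <= b) w t) ->
  w a <= 0 -> a <= t1 <= b -> 0 < w t1 ->
  exists c, a <= c < t1 /\ w c = 0 /\ forall x, c < x <= t1 -> 0 < w x.
Proof.
  intros Hc Ha Ht1 Hpos.
  set (E := fun x => a <= x <= t1 /\ w x <= 0).
  assert (Hb : bound E) by (exists t1; intros x [Hx _]; lra).
  assert (He : exists x, E x) by (exists a; unfold E; lra).
  destruct (completeness E Hb He) as [c [Hub Hlub]].
  assert (Hac : a <= c) by (apply Hub; unfold E; lra).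
  assert (Hct : c <= t1) by (apply Hlub; intros x [Hx _]; lra).
  assert (After : forall x, c < x <= t1 -> 0 < w x).
  { intros x Hx. destruct (Rlt_dec 0 (w x)) as [p|p]; auto.
    assert (Ex : E x) by (split; lra). specialize (Hub x Ex). lra. }
  pose proof (Hc c ltac:(lra)) as Hcc.
  assert (Wc_le : w c <= 0).
  { destruct (Rle_dec (w c) 0) as [p|p]; auto. apply Rnot_le_lt in p.
    destruct (Hcc (w c) p) as [d [Hd0 Hdd]].
    assert (c <= c - d / 2); [|lra]. apply Hlub. intros x [Hx Hwx].
    destruct (Rle_dec x (c - d / 2)) as [q|q]; auto.
    assert (x <= c) by (apply Hub; split; auto).
    specialize (Hdd x ltac:(lra) ltac:(rewrite Rabs_left1 by lra; lra)).
    apply Rabs_def2 in Hdd. lra. }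
  assert (Hct2 : c < t1) by (destruct Hct as [H | H]; [exact H | subst; lra]).
  exists c. repeat split; auto.
  destruct Wc_le as [p|p]; auto. exfalso.
  destruct (Hcc (- w c) ltac:(lra)) as [d [Hd0 Hdd]].
  set (x := Rmin (c + d / 2) t1).
  assert (c < x <= t1 /\ x <= c + d / 2) as [Hx Hx']
    by (unfold x; split; [split; [apply Rmin_glb_lt|apply Rmin_r]|apply Rmin_l]; lra).
  specialize (Hdd x ltac:(lra) ltac:(rewrite Rabs_right by lra; lra)).
  apply Rabs_def2 in Hdd. specialize (After x Hx). lra.
Qed.

Lemma derivable_exp_linear K x :
  derivable_pt_lim (fun y => exp (- K * y)) x (exp (- K * x) * (- K)).
Proof.
  apply (derivable_pt_lim_comp (fun y => - K * y) exp x (- K)).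
  - pose proof (derivable_pt_lim_scal id (- K) x 1 (derivable_pt_lim_id x)) as H.
    rewrite Rmult_1_r in H. exact H.
  - apply derivable_pt_lim_exp.
Qed.

(* Gronwall: a function vanishing at c cannot become positive on (c, u]
   while w' <= K w there, since exp(-K x) w x is then nonincreasing. *)
Lemma gronwall_no_escape (c u K : R) (w dw : R -> R) : c < u ->
  (forall t, c <= t <= u -> continuous_within (fun x => c <= x <= u) w t) ->
  (forall t, c < t < u -> derivable_pt_lim w t (dw t)) ->
  w c = 0 ->
  (forall t, c < t < u -> 0 < w t -> dw t <= K * w t) ->
  ~ (forall t, c < t <= u -> 0 < w t).
Proof.
  intros Hcu Hc Hd Hw0 Hgrowth Hpos.
  set (v := fun x => exp (- K * x) * w x).
  set (dv := fun x => exp (- K * x) * (- K) * w x + exp (- K * x) * dw x).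
  destruct (MVT_closed v dv c u Hcu) as [xi [Hxi Hmvt]].
  - intros t Ht. apply continuous_within_mult; auto.
    apply continuous_within_of_pt, derivable_continuous_pt.
    exists (exp (- K * t) * (- K)). apply derivable_exp_linear.
  - intros t Ht.
    apply (derivable_pt_lim_mult (fun y => exp (- K * y)) w); auto.
    apply derivable_exp_linear.
  - unfold v, dv in Hmvt. rewrite Hw0 in Hmvt.
    pose proof (Hpos xi ltac:(lra)). pose proof (Hpos u ltac:(lra)).
    specialize (Hgrowth xi Hxi ltac:(lra)).
    pose proof (exp_pos (- K * xi)). pose proof (exp_pos (- K * u)).
    assert (exp (- K * xi) * (- K) * w xi + exp (- K * xi) * dw xi <= 0) by nra.
    nra.
Qed.

Lemma comparison_principle (a b : R) (w dw : R -> R) :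
  (forall t, a <= t <= b -> continuous_within (fun x => a <= x <= b) w t) ->
  (forall t, a < t < b -> derivable_pt_lim w t (dw t)) ->
  w a <= 0 ->
  (forall c, a <= c < b -> w c = 0 -> exists K d, 0 < d /\
      forall t, c < t < c + d -> t < b -> 0 < w t -> dw t <= K * w t) ->
  forall t, a <= t <= b -> w t <= 0.
Proof.
  intros Hc Hd Ha Hloc t1 Ht1.
  destruct (Rle_dec (w t1) 0) as [ok|nok]; auto. exfalso. apply Rnot_le_lt in nok.
  destruct (last_zero_before_positive a b t1 w Hc Ha Ht1 nok)
    as [c [Hc1 [Hwc After]]].
  destruct (Hloc c ltac:(lra) Hwc) as [K [d [Hd0 HK]]].
  set (u := Rmin (c + d / 2) ((c + t1) / 2)).
  assert (c < u /\ u <= c + d / 2 /\ u <= (c + t1) / 2) as [Hu [Hu1 Hu2]]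
    by (unfold u; repeat split; [apply Rmin_glb_lt | apply Rmin_l | apply Rmin_r]; lra).
  apply (gronwall_no_escape c u K w dw Hu).
  - intros t Ht. apply continuous_within_subset with (fun x => a <= x <= b).
    + apply Hc; lra.
    + intros; lra.
  - intros t Ht. apply Hd; lra.
  - exact Hwc.
  - intros t Ht Hwt. apply HK; lra.
  - intros t Ht. apply After; lra.
Qed.

Section CurveComparison.

Variables (T s sg : R) (X1 X2 Y1 Y2 dX2 : R -> R) (P1 P2 : R -> R -> R).
Hypothesis Hs : s = 1 \/ s = -1.
Hypothesis Hsg : sg = 1 \/ sg = -1.
Hypothesis hX1 : forall t, Icc0 T t -> has_deriv_within (Icc0 T) X1 t (P1 (X1 t) (X2 t)).
Hypothesis hX2 : forall t, Icc0 T t -> has_deriv_within (Icc0 T) X2 t (dX2 t).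
Hypothesis hY1 : forall t, Icc0 T t -> has_deriv_within (Icc0 T) Y1 t (P1 (Y1 t) (Y2 t)).
Hypothesis hY2 : forall t, Icc0 T t -> has_deriv_within (Icc0 T) Y2 t (P2 (Y1 t) (Y2 t)).
Hypothesis HPX : forall t, Icc0 T t -> 0 < s * P1 (X1 t) (X2 t).
Hypothesis HPY : forall t, Icc0 T t -> 0 < s * P1 (Y1 t) (Y2 t).
Hypothesis C1 : C1_R2 P1.
Hypothesis C2 : C1_R2 P2.
Hypothesis E1 : X1 0 = Y1 0.
Hypothesis E2 : X2 0 = Y2 0.
Hypothesis Hcase : forall t, Icc0 T t -> sg * (dX2 t - P2 (X1 t) (X2 t)) <= 0.

Let fY := graph_fun (Icc0 T) Y1 Y2.

Lemma X1_strict_mono :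
  forall x y, Icc0 T x -> Icc0 T y -> x < y -> s * X1 x < s * X1 y.
Proof. exact (strict_mono_of_deriv_sign T s X1 _ hX1 HPX). Qed.

Lemma Y1_strict_mono :
  forall x y, Icc0 T x -> Icc0 T y -> x < y -> s * Y1 x < s * Y1 y.
Proof. exact (strict_mono_of_deriv_sign T s Y1 _ hY1 HPY). Qed.

Lemma fY_graph : forall s', Icc0 T s' -> fY (Y1 s') = Y2 s'.
Proof.
  intros. apply graph_fun_spec; auto. exact (inj_of_strict_mono T s Y1 Y1_strict_mono).
Qed.

Lemma fY_derivable_interior s1 s' : Icc0 T s1 -> 0 < s' < s1 ->
  derivable_pt_lim fY (Y1 s') (P2 (Y1 s') (Y2 s') / P1 (Y1 s') (Y2 s')).
Proof.
  intros Hs1 Hs'. unfold Icc0 in Hs1.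
  apply deriv_within_interior with (image (Icc0 T) Y1).
  { apply (graph_fun_deriv_monotone T s Y1 Y2 (fun t => P1 (Y1 t) (Y2 t))
      (fun t => P2 (Y1 t) (Y2 t)));
      auto; unfold Icc0; lra. }
  assert (M1 : s * Y1 0 < s * Y1 s') by (apply Y1_strict_mono; unfold Icc0; lra).
  assert (M2 : s * Y1 s' < s * Y1 s1) by (apply Y1_strict_mono; unfold Icc0; lra).
  exists (Rmin (Rabs (Y1 s' - Y1 0)) (Rabs (Y1 s1 - Y1 s'))).
  pose proof (Rmin_l (Rabs (Y1 s' - Y1 0)) (Rabs (Y1 s1 - Y1 s'))).
  pose proof (Rmin_r (Rabs (Y1 s' - Y1 0)) (Rabs (Y1 s1 - Y1 s'))).
  split.
  - apply Rmin_pos; apply Rabs_pos_lt; destruct Hs; subst; lra.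
  - intros x Hx. apply (image_contains_segment T Y1 _ hY1 s1 Hs1).
    apply Rabs_def2 in Hx.
    unfold Rabs in *; repeat destruct Rcase_abs; destruct Hs; subst; lra.
Qed.

Section Meeting.

Variables t1 s1 : R.
Hypothesis Ht1 : Icc0 T t1.
Hypothesis Hs1 : Icc0 T s1.
Hypothesis Hmeet : X1 t1 = Y1 s1.

Let Z := fun t => fY (X1 t).

Lemma X1_range_in_Y1_range :
  forall t, 0 <= t <= t1 -> exists s', 0 <= s' <= s1 /\ X1 t = Y1 s'.
Proof.
  intros t Ht. pose proof Ht1 as Ht1'; pose proof Hs1 as Hs1'; unfold Icc0 in Ht1', Hs1'.
  assert (A1 : s * X1 0 <= s * X1 t).
  { destruct (Req_dec t 0) as [->|n]; [lra|].
    left; apply X1_strict_mono; unfold Icc0; lra. }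
  assert (A2 : s * X1 t <= s * X1 t1).
  { destruct (Req_dec t t1) as [->|n]; [lra|].
    left; apply X1_strict_mono; unfold Icc0; lra. }
  destruct (IVT_closed Y1 0 s1 (X1 t) ltac:(lra)) as [z [Hz Ez]].
  - intros; apply (deriv_continuous_subinterval T Y1 _ hY1); lra.
  - rewrite <- E1, <- Hmeet. destruct Hs; subst; lra.
  - exists z; split; auto.
Qed.

Lemma Z_continuous :
  forall t, 0 <= t <= t1 -> continuous_within (fun x => 0 <= x <= t1) Z t.
Proof.
  intros t Ht. pose proof Ht1 as Ht1'; pose proof Hs1 as Hs1'; unfold Icc0 in Ht1', Hs1'. unfold Z.
  apply continuous_within_comp with (image (Icc0 T) Y1).
  - destruct (X1_range_in_Y1_range t Ht) as [s' [Hs' E]]. rewrite E.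
    eapply deriv_within_continuous.
    apply (graph_fun_deriv_monotone T s Y1 Y2 (fun t => P1 (Y1 t) (Y2 t))
      (fun t => P2 (Y1 t) (Y2 t)));
      auto; unfold Icc0; lra.
  - apply (deriv_continuous_subinterval T X1 _ hX1); lra.
  - intros x Hx. destruct (X1_range_in_Y1_range x Hx) as [s' [Hs' E]].
    rewrite E. exists s'; split; auto. unfold Icc0; lra.
Qed.

Lemma Z_derivable : forall t, 0 < t < t1 ->
  derivable_pt_lim Z t (P2 (X1 t) (Z t) / P1 (X1 t) (Z t) * P1 (X1 t) (X2 t)).
Proof.
  intros t Ht. pose proof Ht1 as Ht1'; pose proof Hs1 as Hs1'; unfold Icc0 in Ht1', Hs1'.
  destruct (X1_range_in_Y1_range t ltac:(lra)) as [s' [Hs' E]].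
  pose proof (inj_of_strict_mono T s X1 X1_strict_mono) as HiX.
  assert (s' <> 0).
  { intro; subst. rewrite <- E1 in E. apply HiX in E; unfold Icc0; lra. }
  assert (s' <> s1).
  { intro; subst. rewrite <- Hmeet in E. apply HiX in E; unfold Icc0; lra. }
  assert (EZ : Z t = Y2 s') by (unfold Z; rewrite E; apply fY_graph; unfold Icc0; lra).
  rewrite EZ.
  apply (derivable_pt_lim_comp X1 fY).
  - apply deriv_within_interior with (Icc0 T); [apply hX1|apply Icc0_interior_nbhd];
      unfold Icc0; lra.
  - rewrite E. apply (fY_derivable_interior s1); auto; lra.
Qed.

Let w := fun t => sg * (X2 t - Z t).
Let dw := fun t =>
  sg * (dX2 t - P2 (X1 t) (Z t) / P1 (X1 t) (Z t) * P1 (X1 t) (X2 t)).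

(* Right after a zero of the gap w, its growth is controlled by w itself:
   sg * (X2' - P2(X)) <= 0 and the slope field is locally Lipschitz. *)
Lemma gap_growth_bound : forall c, 0 <= c < t1 -> w c = 0 ->
  exists K d, 0 < d /\
    forall t, c < t < c + d -> t < t1 -> 0 < w t -> dw t <= K * w t.
Proof.
  intros c Hc Hwc. pose proof Ht1 as Ht1'; pose proof Hs1 as Hs1'; unfold Icc0 in Ht1', Hs1'.
  assert (Ec : X2 c = Z c) by (unfold w in Hwc; destruct Hsg; subst; lra).
  assert (P0 : P1 (X1 c) (X2 c) <> 0).
  { specialize (HPX c ltac:(unfold Icc0; lra)). intro E; rewrite E in HPX; lra. }
  destruct (slope_field_locally_lipschitz P1 P2 C1 C2 _ _ P0) as [r [K [Hr HK]]].
  destruct (deriv_continuous_subinterval T X1 _ hX1 0 t1 ltac:(lra) ltac:(lra) c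
              ltac:(lra) r Hr) as [d1 [Hd1 HH1]].
  destruct (deriv_continuous_subinterval T X2 _ hX2 0 t1 ltac:(lra) ltac:(lra) c
              ltac:(lra) r Hr) as [d2 [Hd2 HH2]].
  destruct (Z_continuous c ltac:(lra) r Hr) as [d3 [Hd3 HH3]].
  set (d := Rmin d1 (Rmin d2 d3)).
  assert (d <= d1 /\ d <= d2 /\ d <= d3) as [Hd1' [Hd2' Hd3']].
  { unfold d. pose proof (Rmin_l d1 (Rmin d2 d3)). pose proof (Rmin_r d1 (Rmin d2 d3)).
    pose proof (Rmin_l d2 d3). pose proof (Rmin_r d2 d3). lra. }
  exists K, d. split; [unfold d; repeat apply Rmin_pos; lra|].
  intros t Ht Htb Hwt.
  assert (Htc : Rabs (t - c) < d) by (rewrite Rabs_right; lra).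
  specialize (HH1 t ltac:(lra) ltac:(lra)). specialize (HH2 t ltac:(lra) ltac:(lra)).
  specialize (HH3 t ltac:(lra) ltac:(lra)). rewrite <- Ec in HH3.
  specialize (HK _ _ _ HH1 HH2 HH3).
  specialize (Hcase t ltac:(unfold Icc0; lra)).
  assert (Ew : w t = Rabs (X2 t - Z t)).
  { rewrite <- (Rabs_right (w t)) by lra. unfold w. rewrite Rabs_mult.
    replace (Rabs sg) with 1 by (destruct Hsg; subst; unfold Rabs; destruct Rcase_abs; lra).
    ring. }
  unfold dw. rewrite Ew.
  set (Q := P2 (X1 t) (X2 t) - P2 (X1 t) (Z t) * P1 (X1 t) (X2 t) / P1 (X1 t) (Z t)) in *.
  replace (sg * (dX2 t - P2 (X1 t) (Z t) / P1 (X1 t) (Z t) * P1 (X1 t) (X2 t)))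
    with (sg * (dX2 t - P2 (X1 t) (X2 t)) + sg * Q) by (unfold Q, Rdiv; ring).
  assert (sg * Q <= Rabs Q).
  { pose proof (Rle_abs Q). pose proof (Rle_abs (- Q)). rewrite Rabs_Ropp in *.
    destruct Hsg; subst; lra. }
  lra.
Qed.

Lemma curve_comparison : sg * (X2 t1 - Y2 s1) <= 0.
Proof.
  pose proof Ht1 as Ht1'; pose proof Hs1 as Hs1'; unfold Icc0 in Ht1', Hs1'.
  assert (Hw : w t1 <= 0).
  { apply (comparison_principle 0 t1 w dw); try lra.
    - intros t Ht. unfold w.
      apply (continuous_within_mult _ (fun _ => sg) (fun x => X2 x - Z x)).
      + apply continuous_within_const.
      + apply continuous_within_minus; [|apply Z_continuous; lra].
        apply (deriv_continuous_subinterval T X2 _ hX2); lra.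
    - intros t Ht. unfold w, dw.
      apply derivable_pt_lim_scal, derivable_pt_lim_minus; [|apply Z_derivable; lra].
      apply deriv_within_interior with (Icc0 T);
        [apply hX2 | apply Icc0_interior_nbhd]; unfold Icc0; lra.
    - unfold w, Z. rewrite E1, fY_graph, E2 by (unfold Icc0; lra). lra.
    - exact gap_growth_bound. }
  unfold w, Z in Hw. rewrite Hmeet, fY_graph in Hw by auto. exact Hw.
Qed.

End Meeting.

Lemma graph_comparison : forall u, image (Icc0 T) X1 u -> image (Icc0 T) Y1 u ->
  sg * (graph_fun (Icc0 T) X1 X2 u - fY u) <= 0.
Proof.
  intros u [t [Ht Eu]] [s' [Hs' Eu']]. subst u.
  rewrite graph_fun_spec by (auto; exact (inj_of_strict_mono T s X1 X1_strict_mono)).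
  rewrite <- Eu', fY_graph by auto.
  apply (curve_comparison t s'); auto.
Qed.

End CurveComparison.

(* Under the sign hypothesis, P1 has one sign s = +-1 along both curves on
   all of [0, T] (at t = 0 the curves coincide). *)
Lemma uniform_orientation T (X1 X2 Y1 Y2 : R -> R) (P1 : R -> R -> R) :
  X1 0 = Y1 0 -> X2 0 = Y2 0 ->
  (0 < P1 (X1 0) (X2 0) /\
   forall t, 0 < t <= T -> 0 < P1 (X1 t) (X2 t) /\ 0 < P1 (Y1 t) (Y2 t)) \/
  (P1 (X1 0) (X2 0) < 0 /\
   forall t, 0 < t <= T -> P1 (X1 t) (X2 t) < 0 /\ P1 (Y1 t) (Y2 t) < 0) ->
  exists s, (s = 1 \/ s = -1) /\
    (forall t, Icc0 T t -> 0 < s * P1 (X1 t) (X2 t)) /\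
    (forall t, Icc0 T t -> 0 < s * P1 (Y1 t) (Y2 t)).
Proof.
  intros E1 E2 [[H0 H]|[H0 H]]; [exists 1 | exists (-1)];
    (split; [auto|]); split; intros t [Ht0 HtT];
    (destruct (Req_dec t 0) as [->|Hn];
     [rewrite <- ?E1, <- ?E2; lra | specialize (H t ltac:(lra)); lra]).
Qed.

Theorem mainTheorem16
  (T : R) (X1 X2 Y1 Y2 dX1 dX2 : R -> R) (Psi1 Psi2 : R -> R -> R)
  (hX1 : forall t, Icc0 T t -> has_deriv_within (Icc0 T) X1 t (dX1 t))
  (hX2 : forall t, Icc0 T t -> has_deriv_within (Icc0 T) X2 t (dX2 t))
  (hdX1c : forall t, Icc0 T t -> continuous_within (Icc0 T) dX1 t)
  (hdX2c : forall t, Icc0 T t -> continuous_within (Icc0 T) dX2 t)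
  (hPsi1 : C1_R2 Psi1) (hPsi2 : C1_R2 Psi2)
  (hY1 : forall t, Icc0 T t -> has_deriv_within (Icc0 T) Y1 t (Psi1 (Y1 t) (Y2 t)))
  (hY2 : forall t, Icc0 T t -> has_deriv_within (Icc0 T) Y2 t (Psi2 (Y1 t) (Y2 t)))
  (h0 : X1 0 = Y1 0 /\ X2 0 = Y2 0)
  (hsign :
     (0 < Psi1 (X1 0) (X2 0) /\
      forall t, 0 < t <= T -> 0 < Psi1 (X1 t) (X2 t) /\ 0 < Psi1 (Y1 t) (Y2 t)) \/
     (Psi1 (X1 0) (X2 0) < 0 /\
      forall t, 0 < t <= T -> Psi1 (X1 t) (X2 t) < 0 /\ Psi1 (Y1 t) (Y2 t) < 0))
  (hdX1 : forall t, Icc0 T t -> dX1 t = Psi1 (X1 t) (X2 t))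
  (hcase : (forall t, Icc0 T t -> dX2 t <= Psi2 (X1 t) (X2 t)) \/
           (forall t, Icc0 T t -> dX2 t >= Psi2 (X1 t) (X2 t))) :
  inj_on (Icc0 T) X1 /\ inj_on (Icc0 T) Y1 /\
  exists fX fY : R -> R,
    (forall t, Icc0 T t -> fX (X1 t) = X2 t) /\
    (forall t, Icc0 T t -> fY (Y1 t) = Y2 t) /\
    (forall u, image (Icc0 T) X1 u -> u <> X1 0 ->
       exists l, has_deriv_within (image (Icc0 T) X1) fX u l) /\
    (forall u, image (Icc0 T) Y1 u -> u <> X1 0 ->
       exists l, has_deriv_within (image (Icc0 T) Y1) fY u l) /\
    ((forall t, Icc0 T t -> dX2 t <= Psi2 (X1 t) (X2 t)) ->
       forall u, image (Icc0 T) X1 u -> image (Icc0 T) Y1 u -> fX u <= fY u) /\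
    ((forall t, Icc0 T t -> dX2 t >= Psi2 (X1 t) (X2 t)) ->
       forall u, image (Icc0 T) X1 u -> image (Icc0 T) Y1 u -> fX u >= fY u).
Proof.
  destruct h0 as [E1 E2].
  destruct (uniform_orientation T X1 X2 Y1 Y2 Psi1 E1 E2 hsign) as [s [Hs [HPX HPY]]].
  assert (hX1' : forall t, Icc0 T t -> has_deriv_within (Icc0 T) X1 t (Psi1 (X1 t) (X2 t)))
    by (intros t Ht; rewrite <- hdX1; auto).
  assert (HdX1 : forall t, Icc0 T t -> 0 < s * dX1 t) by (intros t Ht; rewrite hdX1; auto).
  assert (iX : inj_on (Icc0 T) X1)
    by exact (inj_of_strict_mono T s X1 (strict_mono_of_deriv_sign T s X1 dX1 hX1 HdX1)).
  assert (iY : inj_on (Icc0 T) Y1)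
    by exact (inj_of_strict_mono T s Y1 (strict_mono_of_deriv_sign T s Y1 _ hY1 HPY)).
  pose proof (graph_comparison T s 1 X1 X2 Y1 Y2 dX2 Psi1 Psi2 Hs (or_introl eq_refl)
                hX1' hX2 hY1 hY2 HPX HPY hPsi1 hPsi2 E1 E2) as Below.
  pose proof (graph_comparison T s (-1) X1 X2 Y1 Y2 dX2 Psi1 Psi2 Hs (or_intror eq_refl)
                hX1' hX2 hY1 hY2 HPX HPY hPsi1 hPsi2 E1 E2) as Above.
  split; [exact iX | split; [exact iY|]].
  exists (graph_fun (Icc0 T) X1 X2), (graph_fun (Icc0 T) Y1 Y2).
  repeat split.
  - intros; apply graph_fun_spec; auto.
  - intros; apply graph_fun_spec; auto.
  - intros u [t [Ht <-]] _. eexists.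
    exact (graph_fun_deriv_monotone T s X1 X2 dX1 dX2 Hs hX1 hX2 HdX1 t Ht).
  - intros u [t [Ht <-]] _. eexists.
    exact (graph_fun_deriv_monotone T s Y1 Y2 _ _ Hs hY1 hY2 HPY t Ht).
  - intros Hle u HuX HuY.
    assert (H := Below ltac:(intros t Ht; specialize (Hle t Ht); lra) u HuX HuY). lra.
  - intros Hge u HuX HuY.
    assert (H := Above ltac:(intros t Ht; specialize (Hge t Ht); lra) u HuX HuY). lra.
Qed.
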